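(* (1) If $(X,a,\eta_a,\mu_a)$ is a $\mathcal V$-category, then $(TX,Ta,T\eta_a,T\mu_a\cdot\kappa_{a,a})$ is a $\mathcal V$-category. (2) If $(f,\varphi_f):(X,a,\eta_a,\mu_a)\to(Y,b,\eta_b,\mu_b)$ is a $\mathcal V$-functor, then $(Tf,\varphi_{Tf}):(TX,Ta)\to(TY,Tb)$ with $\varphi_{Tf}:=\kappa^{-1}_{b,f}\cdot T\varphi_f\cdot\kappa_{f,a}$ is a $\mathcal V$-functor. (3) If $\zeta:(f,\varphi_f)\to(g,\varphi_g)$ is a $\mathcal V$-natural transformation between $\mathcal V$-functors $(X,a)\to(Y,b)$, then $\kappa^{-1}_{b,f}\cdot T\zeta\cdot\kappa_{g,a}$ is a $\mathcal V$-natural transformation $(Tf,\varphi_{Tf})\to(Tg,\varphi_{Tg})$.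
   Context: Setting. $\mathcal V$ is a complete, cocomplete symmetric monoidal closed category with tensor $\otimes$, unit $I$ and chosen initial object $\bot$; coherence isomorphisms are suppressed. $\mathcal V\text{-}\mathbf{Rel}$: objects sets; 1-cells $r:X\rightharpoonup Y$ families of $\mathcal V$-objects $r(x,y)$; 2-cells families of morphisms $r(x,y)\to r'(x,y)$, composed vertically ($\cdot$) componentwise; horizontal composition $(sr)(x,z)=\sum_yr(x,y)\otimes s(y,z)$ (on 2-cells via $\otimes,\sum$); juxtaposition denotes whiskering. A function $f$ is the $\mathcal V$-relation with $f(x,y)=I$ if $f(x)=y$, $\bot$ otherwise; transpose $r^\circ(y,x)=r(x,y)$; $f\dashv f^\circ$ with unit $\lambda_f$, counit $\rho_f$. $\mathbb T=(T,e,m)$ is a monad on Set with lax extension to $\mathcal V\text{-}\mathbf{Rel}$: a lax functor $T$ agreeing with the Set-functor on functions, strictly functorial on 2-cells, with natural comparisons $\kappa_{s,r}:TsTr\to T(sr)$, $\kappa_{t,sr}\cdot(Tt\kappa_{s,r})=\kappa_{ts,r}\cdot(\kappa_{t,s}Tr)$, $\kappa_{r,1}=\kappa_{1,r}=1$, and $T(f^\circ)=(Tf)^\circ$ for functions $f$ (hence $\kappa_{s,f}$ and $\kappa_{f^\circ,t}$ are invertible for functions $f$); plus 2-cells $\alpha_r:e_Yr\to Tre_X$, $\beta_r:m_YT^2r\to Trm_X$ (identities for functions) satisfying the compatibility conditions (mon) $(\beta_re_{TX})\cdot(m_Y\alpha_{Tr})=1_{Tr}$; $(\beta_rTe_X)\cdot(m_Y\kappa^{-1}_{Tr,e_X})\cdot(m_YT\alpha_r)\cdot(m_Y\kappa_{e_Y,r})=1_{Tr}$;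 $(\beta_rTm_X)\cdot(m_Y\kappa^{-1}_{Tr,m_X})\cdot(m_YT\beta_r)\cdot(m_Y\kappa_{m_Y,T^2r})=(\beta_rm_{TX})\cdot(m_Y\beta_{Tr})$; (coh) $\alpha_{sr}=(\kappa_{s,r}e_X)\cdot(Ts\alpha_r)\cdot(\alpha_sr)$, $\beta_{sr}\cdot(m_ZT\kappa_{s,r})\cdot(m_Z\kappa_{Ts,Tr})=(\kappa_{s,r}m_X)\cdot(Ts\beta_r)\cdot(\beta_sT^2r)$; (nat) $(T\varphi e_X)\cdot\alpha_r=\alpha_{r'}\cdot(e_Y\varphi)$, $(T\varphi m_X)\cdot\beta_r=\beta_{r'}\cdot(m_YT^2\varphi)$. $\mathcal V\text{-}\mathbf{Cat}$: a $\mathcal V$-category $(X,a,\eta_a,\mu_a)$ is a set $X$ with $a:X\rightharpoonup X$, $\eta_a:1_X\to a$, $\mu_a:aa\to a$ such that $\mu_a\cdot(\eta_aa)=1_a=\mu_a\cdot(a\eta_a)$ and $\mu_a\cdot(\mu_aa)=\mu_a\cdot(a\mu_a)$. A $\mathcal V$-functor $(f,\varphi_f):(X,a)\to(Y,b)$ is a function $f$ with $\varphi_f:fa\to bf$ such that $\varphi_f\cdot(f\eta_a)=\eta_bf$ and $\varphi_f\cdot(f\mu_a)=(\mu_bf)\cdot(b\varphi_f)\cdot(\varphi_fa)$. A $\mathcal V$-natural transformation $\zeta:(f,\varphi_f)\to(g,\varphi_g)$ is a 2-cell $\zeta:ga\to bf$ with $\zeta=(\mu_bf)\cdot(b\varphi_f)\cdot(\zeta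 a)\cdot(g\eta_aa)$ and $\zeta=(\mu_bf)\cdot(b\zeta)\cdot(bg\eta_a)\cdot\varphi_g$. (This is the 2-category of $(\mathbb T,\mathcal V)$-categories for the identity monad with trivial extension.) *)

From Stdlib Require Import ClassicalEpsilon.

Record SMCC := {
  ob : Type;
  hom : ob -> ob -> Type;
  idm : forall A, hom A A;
  cmp : forall {A B C : ob}, hom B C -> hom A B -> hom A C;
  cmp_id_l : forall A B (f : hom A B), cmp (idm B) f = f;
  cmp_id_r : forall A B (f : hom A B), cmp f (idm A) = f;
  cmp_assoc : forall A B C D (f : hom A B) (g : hom B C) (h : hom C D),
      cmp h (cmp g f) = cmp (cmp h g) f;
  ten : ob -> ob -> ob;
  tmap : forall {A B A' B' : ob}, hom A A' -> hom B B' -> hom (ten A B) (ten A' B');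
  tmap_id : forall A B, tmap (idm A) (idm B) = idm (ten A B);
  tmap_cmp : forall A B C A' B' C' (f : hom A B) (f' : hom B C)
      (g : hom A' B') (g' : hom B' C'),
      tmap (cmp f' f) (cmp g' g) = cmp (tmap f' g') (tmap f g);
  unit : ob;
  asc : forall A B C, hom (ten (ten A B) C) (ten A (ten B C));
  asc_inv : forall A B C, hom (ten A (ten B C)) (ten (ten A B) C);
  asc_iso1 : forall A B C, cmp (asc_inv A B C) (asc A B C) = idm _;
  asc_iso2 : forall A B C, cmp (asc A B C) (asc_inv A B C) = idm _;
  asc_nat : forall A B C A' B' C' (f : hom A A') (g : hom B B') (h : hom C C'),
      cmp (asc A' B' C') (tmap (tmap f g) h) = cmp (tmap f (tmap g h)) (asc A B C);
  lu : forall A, hom (ten unit A) A;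
  lu_inv : forall A, hom A (ten unit A);
  lu_iso1 : forall A, cmp (lu_inv A) (lu A) = idm _;
  lu_iso2 : forall A, cmp (lu A) (lu_inv A) = idm _;
  lu_nat : forall A B (f : hom A B), cmp (lu B) (tmap (idm unit) f) = cmp f (lu A);
  ru : forall A, hom (ten A unit) A;
  ru_inv : forall A, hom A (ten A unit);
  ru_iso1 : forall A, cmp (ru_inv A) (ru A) = idm _;
  ru_iso2 : forall A, cmp (ru A) (ru_inv A) = idm _;
  ru_nat : forall A B (f : hom A B), cmp (ru B) (tmap f (idm unit)) = cmp f (ru A);
  pentagon : forall A B C D,
      cmp (asc A B (ten C D)) (asc (ten A B) C D)
      = cmp (tmap (idm A) (asc B C D))
            (cmp (asc A (ten B C) D) (tmap (asc A B C) (idm D)));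
  triangle : forall A B,
      cmp (tmap (idm A) (lu B)) (asc A unit B) = tmap (ru A) (idm B);
  sym : forall A B, hom (ten A B) (ten B A);
  sym_invol : forall A B, cmp (sym B A) (sym A B) = idm _;
  sym_nat : forall A B A' B' (f : hom A A') (g : hom B B'),
      cmp (sym A' B') (tmap f g) = cmp (tmap g f) (sym A B);
  hexagon : forall A B C,
      cmp (asc B C A) (cmp (sym A (ten B C)) (asc A B C))
      = cmp (tmap (idm B) (sym A C)) (cmp (asc B A C) (tmap (sym A B) (idm C)));
  ihom : ob -> ob -> ob;
  curry : forall {A B C : ob}, hom (ten A B) C -> hom A (ihom B C);
  uncurry : forall {A B C : ob}, hom A (ihom B C) -> hom (ten A B) C;
  curry_uncurry : forall A B C (h : hom A (ihom B C)), curry (uncurry h) = h;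
  uncurry_curry : forall A B C (h : hom (ten A B) C), uncurry (curry h) = h;
  curry_nat : forall A A' B C (h : hom (ten A B) C) (g : hom A' A),
      curry (cmp h (tmap g (idm B))) = cmp (curry h) g;
  bot : ob;
  bot_map : forall A, hom bot A;
  bot_uniq : forall A (h : hom bot A), h = bot_map A;
  Sum : forall (J : Type), (J -> ob) -> ob;
  inj : forall {J : Type} (F : J -> ob) (j : J), hom (F j) (Sum J F);
  copair : forall {J : Type} {F : J -> ob} {C : ob},
      (forall j, hom (F j) C) -> hom (Sum J F) C;
  copair_inj : forall J (F : J -> ob) C (G : forall j, hom (F j) C) j,
      cmp (copair G) (inj F j) = G j;
  copair_uniq : forall J (F : J -> ob) C (G : forall j, hom (F j) C) (h : hom (Sum J F) C),
      (forall j, cmp h (inj F j) = G j) -> h = copair G;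
  Coeq : forall {A B : ob}, hom A B -> hom A B -> ob;
  coeqm : forall {A B : ob} (f g : hom A B), hom B (Coeq f g);
  coeqm_eq : forall A B (f g : hom A B), cmp (coeqm f g) f = cmp (coeqm f g) g;
  coeq_desc : forall {A B C : ob} (f g : hom A B) (h : hom B C),
      cmp h f = cmp h g -> hom (Coeq f g) C;
  coeq_desc_eq : forall A B C (f g : hom A B) (h : hom B C) (H : cmp h f = cmp h g),
      cmp (coeq_desc f g h H) (coeqm f g) = h;
  coeq_uniq : forall A B C (f g : hom A B) (h : hom B C) (H : cmp h f = cmp h g)
      (k : hom (Coeq f g) C), cmp k (coeqm f g) = h -> k = coeq_desc f g h H;
  Prod : forall (J : Type), (J -> ob) -> ob;
  proj : forall {J : Type} (F : J -> ob) (j : J), hom (Prod J F) (F j);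
  tuple : forall {J : Type} {F : J -> ob} {C : ob},
      (forall j, hom C (F j)) -> hom C (Prod J F);
  proj_tuple : forall J (F : J -> ob) C (G : forall j, hom C (F j)) j,
      cmp (proj F j) (tuple G) = G j;
  tuple_uniq : forall J (F : J -> ob) C (G : forall j, hom C (F j)) (h : hom C (Prod J F)),
      (forall j, cmp (proj F j) h = G j) -> h = tuple G;
  Equ : forall {A B : ob}, hom A B -> hom A B -> ob;
  equm : forall {A B : ob} (f g : hom A B), hom (Equ f g) A;
  equm_eq : forall A B (f g : hom A B), cmp f (equm f g) = cmp g (equm f g);
  equ_lift : forall {A B C : ob} (f g : hom A B) (h : hom C A),
      cmp f h = cmp g h -> hom C (Equ f g);
  equ_lift_eq : forall A B C (f g : hom A B) (h : hom C A) (H : cmp f h = cmp g h),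
      cmp (equm f g) (equ_lift f g h H) = h;
  equ_uniq : forall A B C (f g : hom A B) (h : hom C A) (H : cmp f h = cmp g h)
      (k : hom C (Equ f g)), cmp (equm f g) k = h -> k = equ_lift f g h H
}.

Arguments idm {V} A : rename.
Arguments cmp {V A B C} _ _ : rename.
Arguments ten {V} _ _ : rename.
Arguments tmap {V A B A' B'} _ _ : rename.
Arguments unit {V} : rename.
Arguments asc {V} A B C : rename.
Arguments asc_inv {V} A B C : rename.
Arguments lu {V} A : rename.
Arguments lu_inv {V} A : rename.
Arguments ru {V} A : rename.
Arguments ru_inv {V} A : rename.
Arguments sym {V} A B : rename.
Arguments ihom {V} _ _ : rename.
Arguments curry {V A B C} _ : rename.
Arguments uncurry {V A B C} _ : rename.
Arguments bot {V} : rename.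
Arguments bot_map {V} A : rename.
Arguments Sum {V} J F : rename.
Arguments inj {V J} F j : rename.
Arguments copair {V J F C} _ : rename.

Section VRel.
Variable V : SMCC.

Definition Rel (X Y : Type) := X -> Y -> ob V.

Definition Cell {X Y : Type} (r r' : Rel X Y) := forall x y, hom V (r x y) (r' x y).

Definition idcell {X Y : Type} (r : Rel X Y) : Cell r r := fun x y => idm (r x y).

Definition vcomp {X Y : Type} {r r' r'' : Rel X Y} (psi : Cell r' r'') (phi : Cell r r')
  : Cell r r'' := fun x y => cmp (psi x y) (phi x y).

Definition frel {X Y : Type} (f : X -> Y) : Rel X Y :=
  fun x y => if excluded_middle_informative (f x = y) then @unit V else @bot V.

Definition idrel (X : Type) : Rel X X := frel (fun x : X => x).

Definition transp {X Y : Type} (r : Rel X Y) : Rel Y X := fun y x => r x y.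

(* horizontal composition  s r  (first r, then s):
   (s r)(x,z) = Sum_y r(x,y) (x) s(y,z) *)
Definition rcomp {X Y Z : Type} (s : Rel Y Z) (r : Rel X Y) : Rel X Z :=
  fun x z => Sum Y (fun y => ten (r x y) (s y z)).

Definition hcomp {X Y Z : Type} {s s' : Rel Y Z} {r r' : Rel X Y}
  (psi : Cell s s') (phi : Cell r r') : Cell (rcomp s r) (rcomp s' r') :=
  fun x z => copair (fun y => cmp (inj (fun y => ten (r' x y) (s' y z)) y)
                                  (tmap (phi x y) (psi y z))).

Definition lwhisk {X Y Z : Type} (t : Rel Y Z) {r r' : Rel X Y} (phi : Cell r r')
  : Cell (rcomp t r) (rcomp t r') := hcomp (idcell t) phi.
Definition rwhisk {X Y Z : Type} {s s' : Rel Y Z} (psi : Cell s s') (r : Rel X Y)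
  : Cell (rcomp s r) (rcomp s' r) := hcomp psi (idcell r).

Definition cellcast {X Y : Type} {r r' : Rel X Y} (e : r = r') : Cell r r' :=
  match e in _ = r0 return Cell r r0 with eq_refl => idcell r end.

Definition distR {J : Type} (F : J -> ob V) (B C : ob V)
  (G : forall j, hom V (ten (F j) B) C) : hom V (ten (Sum J F) B) C :=
  uncurry (copair (fun j => curry (G j))).

Definition distL (A : ob V) {J : Type} (F : J -> ob V) (C : ob V)
  (G : forall j, hom V (ten A (F j)) C) : hom V (ten A (Sum J F)) C :=
  cmp (distR F A C (fun j => cmp (G j) (sym (F j) A))) (sym A (Sum J F)).

Definition botten (A C : ob V) : hom V (ten (@bot V) A) C :=
  uncurry (bot_map (ihom A C)).

Definition assocR {W X Y Z : Type} (t : Rel Y Z) (s : Rel X Y) (r : Rel W X)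
  : Cell (rcomp t (rcomp s r)) (rcomp (rcomp t s) r) :=
  fun w z => copair (fun y =>
    distR (fun x => ten (r w x) (s x y)) (t y z) _
      (fun x => cmp (inj (fun x => ten (r w x) (rcomp t s x z)) x)
                  (cmp (tmap (idm (r w x)) (inj (fun y => ten (s x y) (t y z)) y))
                       (asc (r w x) (s x y) (t y z))))).

Definition assocL {W X Y Z : Type} (t : Rel Y Z) (s : Rel X Y) (r : Rel W X)
  : Cell (rcomp (rcomp t s) r) (rcomp t (rcomp s r)) :=
  fun w z => copair (fun x =>
    distL (r w x) (fun y => ten (s x y) (t y z)) _
      (fun y => cmp (inj (fun y => ten (rcomp s r w y) (t y z)) y)
                  (cmp (tmap (inj (fun x => ten (r w x) (s x y)) x) (idm (t y z)))
                       (asc_inv (r w x) (s x y) (t y z))))).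

Definition runit {X Y : Type} (r : Rel X Y) : Cell (rcomp r (idrel X)) r :=
  fun x y => copair (fun x' =>
    match excluded_middle_informative (x = x') as d
      return hom V (ten (if d then @unit V else @bot V) (r x' y)) (r x y) with
    | left e => cmp (match e in _ = x0 return hom V (r x0 y) (r x y) with
                     | eq_refl => idm (r x y) end) (lu (r x' y))
    | right _ => botten (r x' y) (r x y)
    end).

Definition runit_inv {X Y : Type} (r : Rel X Y) : Cell r (rcomp r (idrel X)) :=
  fun x y => cmp (inj (fun x' => ten (idrel X x x') (r x' y)) x)
    (match excluded_middle_informative (x = x) as d
       return hom V (r x y) (ten (if d then @unit V else @bot V) (r x y)) with
     | left _ => lu_inv (r x y)
     | right n => False_rect _ (n eq_refl)
     end).

Definition lunit {X Y : Type} (r : Rel X Y) : Cell (rcomp (idrel Y) r) r :=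
  fun x y => copair (fun y' =>
    match excluded_middle_informative (y' = y) as d
      return hom V (ten (r x y') (if d then @unit V else @bot V)) (r x y) with
    | left e => cmp (match e in _ = y0 return hom V (r x y') (r x y0) with
                     | eq_refl => idm (r x y') end) (ru (r x y'))
    | right _ => cmp (botten (r x y') (r x y)) (sym (r x y') (@bot V))
    end).

Definition lunit_inv {X Y : Type} (r : Rel X Y) : Cell r (rcomp (idrel Y) r) :=
  fun x y => cmp (inj (fun y' => ten (r x y') (idrel Y y' y)) y)
    (match excluded_middle_informative (y = y) as d
       return hom V (r x y) (ten (r x y) (if d then @unit V else @bot V)) with
     | left _ => ru_inv (r x y)
     | right n => False_rect _ (n eq_refl)
     end).

Definition isVCat {X : Type} (a : Rel X X) (eta : Cell (idrel X) a)
  (mu : Cell (rcomp a a) a) : Prop :=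
  vcomp mu (rwhisk eta a) = lunit a /\
  vcomp mu (lwhisk a eta) = runit a /\
  vcomp mu (vcomp (rwhisk mu a) (assocR a a a)) = vcomp mu (lwhisk a mu).

Definition isVFunctor {X Y : Type}
  (a : Rel X X) (eta_a : Cell (idrel X) a) (mu_a : Cell (rcomp a a) a)
  (b : Rel Y Y) (eta_b : Cell (idrel Y) b) (mu_b : Cell (rcomp b b) b)
  (f : X -> Y) (phi : Cell (rcomp (frel f) a) (rcomp b (frel f))) : Prop :=
  isVCat a eta_a mu_a /\ isVCat b eta_b mu_b /\
  vcomp phi (lwhisk (frel f) eta_a)
    = vcomp (rwhisk eta_b (frel f)) (vcomp (lunit_inv (frel f)) (runit (frel f))) /\
  vcomp phi (lwhisk (frel f) mu_a)
    = vcomp (rwhisk mu_b (frel f))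
      (vcomp (assocR b b (frel f))
      (vcomp (lwhisk b phi)
      (vcomp (assocL b (frel f) a)
      (vcomp (rwhisk phi a) (assocR (frel f) a a))))).

Definition isVNat {X Y : Type}
  (a : Rel X X) (eta_a : Cell (idrel X) a) (mu_a : Cell (rcomp a a) a)
  (b : Rel Y Y) (eta_b : Cell (idrel Y) b) (mu_b : Cell (rcomp b b) b)
  (f : X -> Y) (phi_f : Cell (rcomp (frel f) a) (rcomp b (frel f)))
  (g : X -> Y) (phi_g : Cell (rcomp (frel g) a) (rcomp b (frel g)))
  (zeta : Cell (rcomp (frel g) a) (rcomp b (frel f))) : Prop :=
  isVFunctor a eta_a mu_a b eta_b mu_b f phi_f /\
  isVFunctor a eta_a mu_a b eta_b mu_b g phi_g /\
  zeta = vcomp (rwhisk mu_b (frel f))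
         (vcomp (assocR b b (frel f))
         (vcomp (lwhisk b phi_f)
         (vcomp (assocL b (frel f) a)
         (vcomp (rwhisk zeta a)
         (vcomp (rwhisk (lwhisk (frel g) eta_a) a)
                (rwhisk (runit_inv (frel g)) a)))))) /\
  zeta = vcomp (rwhisk mu_b (frel f))
         (vcomp (assocR b b (frel f))
         (vcomp (lwhisk b zeta)
         (vcomp (lwhisk b (lwhisk (frel g) eta_a))
         (vcomp (lwhisk b (runit_inv (frel g))) phi_g)))).

End VRel.

Arguments idcell {V X Y} r.
Arguments vcomp {V X Y r r' r''} psi phi.
Arguments frel {V X Y} f.
Arguments idrel {V} X.
Arguments transp {V X Y} r.
Arguments rcomp {V X Y Z} s r.
Arguments hcomp {V X Y Z s s' r r'} psi phi.
Arguments lwhisk {V X Y Z} t {r r'} phi.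
Arguments rwhisk {V X Y Z s s'} psi r.
Arguments cellcast {V X Y r r'} e.
Arguments assocR {V W X Y Z} t s r.
Arguments assocL {V W X Y Z} t s r.
Arguments runit {V X Y} r.
Arguments runit_inv {V X Y} r.
Arguments lunit {V X Y} r.
Arguments lunit_inv {V X Y} r.
Arguments isVCat {V X} a eta mu.
Arguments isVFunctor {V X Y} a eta_a mu_a b eta_b mu_b f phi.
Arguments isVNat {V X Y} a eta_a mu_a b eta_b mu_b f phi_f g phi_g zeta.

Record SetMonad := {
  T : Type -> Type;
  Tmap : forall {X Y : Type}, (X -> Y) -> T X -> T Y;
  Tmap_id : forall X, Tmap (fun x : X => x) = (fun u => u);
  Tmap_comp : forall X Y Z (f : X -> Y) (g : Y -> Z),
      Tmap (fun x => g (f x)) = (fun u => Tmap g (Tmap f u));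
  e : forall {X : Type}, X -> T X;
  m : forall {X : Type}, T (T X) -> T X;
  e_nat : forall X Y (f : X -> Y) (x : X), Tmap f (e x) = e (f x);
  m_nat : forall X Y (f : X -> Y) (u : T (T X)), Tmap f (m u) = m (Tmap (Tmap f) u);
  m_e : forall X (u : T X), m (e u) = u;
  m_Te : forall X (u : T X), m (Tmap e u) = u;
  m_m : forall X (u : T (T (T X))), m (m u) = m (Tmap m u)
}.

Arguments T {M} X : rename.
Arguments Tmap {M X Y} f : rename.
Arguments Tmap_id M X : rename.

(* Lax extension of the Set-functor T to V-Rel: the lax functor part.  *)
(*  are not used by the statement and are omitted, which only makes    *)
(*  the theorem more general.)                                         *)
Record LaxExt (V : SMCC) (M : SetMonad) := {
  Trel : forall {X Y : Type}, Rel V X Y -> Rel V (@T M X) (@T M Y);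
  Tcell : forall {X Y : Type} {r r' : Rel V X Y}, Cell V r r' -> Cell V (Trel r) (Trel r');
  Tcell_id : forall X Y (r : Rel V X Y), Tcell (idcell r) = idcell (Trel r);
  Tcell_comp : forall X Y (r r' r'' : Rel V X Y) (psi : Cell V r' r'') (phi : Cell V r r'),
      Tcell (vcomp psi phi) = vcomp (Tcell psi) (Tcell phi);
  Trel_fun : forall X Y (f : X -> Y), Trel (frel f) = frel (Tmap f);
  Trel_transp : forall X Y (f : X -> Y), Trel (transp (frel f)) = transp (frel (Tmap f));
  kappa : forall {X Y Z : Type} (s : Rel V Y Z) (r : Rel V X Y),
      Cell V (rcomp (Trel s) (Trel r)) (Trel (rcomp s r));
  kappa_nat : forall X Y Z (s s' : Rel V Y Z) (r r' : Rel V X Y)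
      (psi : Cell V s s') (phi : Cell V r r'),
      vcomp (kappa s' r') (hcomp (Tcell psi) (Tcell phi))
      = vcomp (Tcell (hcomp psi phi)) (kappa s r);
  kappa_assoc : forall W X Y Z (t : Rel V Y Z) (s : Rel V X Y) (r : Rel V W X),
      vcomp (Tcell (assocR t s r))
        (vcomp (kappa t (rcomp s r)) (lwhisk (Trel t) (kappa s r)))
      = vcomp (kappa (rcomp t s) r)
        (vcomp (rwhisk (kappa t s) (Trel r)) (assocR (Trel t) (Trel s) (Trel r)));
  kappa_r1 : forall X Y (r : Rel V X Y),
      vcomp (Tcell (runit r)) (kappa r (idrel X))
      = vcomp (runit (Trel r))
          (lwhisk (Trel r) (cellcast (eq_trans (Trel_fun X X (fun x => x))
                                               (f_equal frel (Tmap_id M X)))));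
  kappa_1r : forall X Y (r : Rel V X Y),
      vcomp (Tcell (lunit r)) (kappa (idrel Y) r)
      = vcomp (lunit (Trel r))
          (rwhisk (cellcast (eq_trans (Trel_fun Y Y (fun y => y))
                                      (f_equal frel (Tmap_id M Y)))) (Trel r))
}.

Arguments Trel {V M} L {X Y} r : rename.
Arguments Tcell {V M} L {X Y r r'} phi : rename.
Arguments Trel_fun {V M} L X Y f : rename.
Arguments kappa {V M} L {X Y Z} s r : rename.

Definition T1eq {V : SMCC} {M : SetMonad} (L : LaxExt V M) (X : Type)
  : Trel L (idrel X) = idrel (@T M X) :=
  eq_trans (Trel_fun L X X (fun x => x)) (f_equal frel (Tmap_id M X)).

Definition Teta {V : SMCC} {M : SetMonad} (L : LaxExt V M) {X : Type} {a : Rel V X X}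
  (eta : Cell V (idrel X) a) : Cell V (idrel (@T M X)) (Trel L a) :=
  vcomp (Tcell L eta) (cellcast (eq_sym (T1eq L X))).

Definition Tmu {V : SMCC} {M : SetMonad} (L : LaxExt V M) {X : Type} {a : Rel V X X}
  (mu : Cell V (rcomp a a) a) : Cell V (rcomp (Trel L a) (Trel L a)) (Trel L a) :=
  vcomp (Tcell L mu) (kappa L a a).

(* kinv . T phi . kappa_{f,a}, read as a 2-cell (Tf)(Ta) -> (Tb)(Tf) where
   Tf is the V-relation of the function Tmap f; kinv is meant to be the
   inverse of kappa_{b,f}. *)
Definition Tconj {V : SMCC} {M : SetMonad} (L : LaxExt V M) {X Y : Type}
  {a : Rel V X X} {b : Rel V Y Y} (f g : X -> Y)
  (kinv : Cell V (Trel L (rcomp b (frel f))) (rcomp (Trel L b) (Trel L (frel f))))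
  (phi : Cell V (rcomp (frel g) a) (rcomp b (frel f)))
  : Cell V (rcomp (frel (Tmap g)) (Trel L a)) (rcomp (Trel L b) (frel (Tmap f))) :=
  vcomp (lwhisk (Trel L b) (cellcast (Trel_fun L X Y f)))
  (vcomp kinv
  (vcomp (Tcell L phi)
  (vcomp (kappa L (frel g) a)
         (rwhisk (cellcast (eq_sym (Trel_fun L X Y g))) (Trel L a))))).

(* Each axiom of a
   V-category, V-functor or V-natural transformation is an equation between pastings of
   2-cells of V-Rel; applying T to it and commuting T past horizontal composition with
   kappa (naturality of kappa, its associativity coherence, the unit conditions
   kappa_{r,1} = kappa_{1,r} = 1, and the invertibility of kappa_{b,f}, which cancels the
   kappa^{-1}_{b,f} in T phi_f) turns it into the corresponding axiom for Ta, Tb and the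
   lifted 2-cells.  Nothing in the computation uses that f is a function until the very
   end, where T (graph of f) = graph of (T f). *)

From Stdlib Require Import FunctionalExtensionality ProofIrrelevance ClassicalEpsilon.

Section Monoidal.
Context {V : SMCC}.

Lemma curry_inj (A B C : ob V) (h k : hom V (ten A B) C) : curry h = curry k -> h = k.
Proof.
  intro H. rewrite <- (uncurry_curry V _ _ _ h), <- (uncurry_curry V _ _ _ k), H.
  reflexivity.
Qed.

Lemma uncurry_nat (A A' B C : ob V) (h : hom V A (ihom B C)) (g : hom V A' A) :
  uncurry (cmp h g) = cmp (uncurry h) (tmap g (idm B)).
Proof. apply curry_inj. rewrite curry_uncurry, curry_nat, curry_uncurry. reflexivity. Qed.

Lemma Sum_ext J (F : J -> ob V) C (h k : hom V (Sum J F) C) :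
  (forall j, cmp h (inj F j) = cmp k (inj F j)) -> h = k.
Proof.
  intro H. rewrite (copair_uniq V J F C (fun j => cmp k (inj F j)) h H).
  symmetry. apply copair_uniq. reflexivity.
Qed.

(* [- (x) B] is a left adjoint, hence preserves coproducts. *)
Lemma ten_Sum_ext_l J (F : J -> ob V) B C (h k : hom V (ten (Sum J F) B) C) :
  (forall j, cmp h (tmap (inj F j) (idm B)) = cmp k (tmap (inj F j) (idm B))) -> h = k.
Proof.
  intro H. apply curry_inj, Sum_ext. intro j. rewrite <- !curry_nat, H. reflexivity.
Qed.

Lemma cmp_sym_inj (A B C : ob V) (h k : hom V (ten A B) C) :
  cmp h (sym B A) = cmp k (sym B A) -> h = k.
Proof.
  intro H. rewrite <- (cmp_id_r V _ _ h), <- (cmp_id_r V _ _ k).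
  rewrite <- (sym_invol V A B), !cmp_assoc, H. reflexivity.
Qed.

Lemma ten_Sum_ext_r J (F : J -> ob V) A C (h k : hom V (ten A (Sum J F)) C) :
  (forall j, cmp h (tmap (idm A) (inj F j)) = cmp k (tmap (idm A) (inj F j))) -> h = k.
Proof.
  intro H. apply cmp_sym_inj, ten_Sum_ext_l. intro j.
  rewrite <- !cmp_assoc, !sym_nat, !cmp_assoc, H. reflexivity.
Qed.

Lemma distR_inj J (F : J -> ob V) B C G j :
  cmp (distR V F B C G) (tmap (inj F j) (idm B)) = G j.
Proof. unfold distR. rewrite <- uncurry_nat, copair_inj, uncurry_curry. reflexivity. Qed.

Lemma distL_inj A J (F : J -> ob V) C G j :
  cmp (distL V A F C G) (tmap (idm A) (inj F j)) = G j.
Proof.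
  unfold distL. rewrite <- cmp_assoc, sym_nat, cmp_assoc, distR_inj.
  rewrite <- cmp_assoc, sym_invol, cmp_id_r. reflexivity.
Qed.

Lemma bot_ten_uniq (A C : ob V) (h k : hom V (ten bot A) C) : h = k.
Proof.
  apply curry_inj. rewrite (bot_uniq V _ (curry h)), (bot_uniq V _ (curry k)). reflexivity.
Qed.

Lemma ten_bot_uniq (A C : ob V) (h k : hom V (ten A bot) C) : h = k.
Proof. apply cmp_sym_inj, bot_ten_uniq. Qed.

Lemma copair_inj_cmp J (F : J -> ob V) C (G : forall j, hom V (F j) C) j A
  (k : hom V A (F j)) : cmp (copair G) (cmp (inj F j) k) = cmp (G j) k.
Proof. rewrite cmp_assoc, copair_inj. reflexivity. Qed.

Lemma distR_inj_cmp J (F : J -> ob V) B C G j A (k : hom V A (ten (F j) B)) :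
  cmp (distR V F B C G) (cmp (tmap (inj F j) (idm B)) k) = cmp (G j) k.
Proof. rewrite cmp_assoc, distR_inj. reflexivity. Qed.

Lemma distL_inj_cmp A0 J (F : J -> ob V) C G j A (k : hom V A (ten A0 (F j))) :
  cmp (distL V A0 F C G) (cmp (tmap (idm A0) (inj F j)) k) = cmp (G j) k.
Proof. rewrite cmp_assoc, distL_inj. reflexivity. Qed.

End Monoidal.

Ltac copair_beta :=
  repeat rewrite <- cmp_assoc;
  repeat (first
    [ match goal with |- context [cmp (copair _) (cmp (inj ?F _) _)] =>
        erewrite (copair_inj_cmp _ F) end
    | match goal with |- context [cmp (distR _ ?F _ _ _) (cmp (tmap (inj _ _) (idm _)) _)] =>
        erewrite (distR_inj_cmp _ F) end
    | match goal with |- context [cmp (distL _ _ ?F _ _) (cmp (tmap (idm _) (inj _ _)) _)] =>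
        erewrite (distL_inj_cmp _ _ F) end
    | match goal with |- context [cmp (copair _) (inj ?F _)] =>
        erewrite (copair_inj _ _ F) end
    | match goal with |- context [cmp (distR _ ?F _ _ _) (tmap (inj _ _) (idm _))] =>
        erewrite (distR_inj _ F) end
    | match goal with |- context [cmp (distL _ _ ?F _ _) (tmap (idm _) (inj _ _))] =>
        erewrite (distL_inj _ _ F) end ];
    repeat rewrite <- cmp_assoc).

Section Cells.
Context {V : SMCC}.

Lemma cell_ext {X Y} {r r' : Rel V X Y} (p q : Cell V r r') :
  (forall x y, p x y = q x y) -> p = q.
Proof.
  intro H. apply functional_extensionality_dep; intro x.
  apply functional_extensionality_dep; intro y. apply H.
Qed.

Lemma vcomp_assoc {X Y} {r1 r2 r3 r4 : Rel V X Y} (p : Cell V r3 r4) (q : Cell V r2 r3)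
  (s : Cell V r1 r2) : vcomp (vcomp p q) s = vcomp p (vcomp q s).
Proof. apply cell_ext; intros; unfold vcomp; rewrite cmp_assoc; reflexivity. Qed.

Lemma vcomp_id_l {X Y} {r r' : Rel V X Y} (p : Cell V r r') : vcomp (idcell r') p = p.
Proof. apply cell_ext; intros; apply cmp_id_l. Qed.

Lemma vcomp_id_r {X Y} {r r' : Rel V X Y} (p : Cell V r r') : vcomp p (idcell r) = p.
Proof. apply cell_ext; intros; apply cmp_id_r. Qed.

Lemma hcomp_id {X Y Z} (s : Rel V Y Z) (r : Rel V X Y) :
  hcomp (idcell s) (idcell r) = idcell (rcomp s r).
Proof.
  apply cell_ext; intros x z. unfold hcomp, idcell. symmetry. apply copair_uniq.
  intro y. rewrite tmap_id, cmp_id_l, cmp_id_r. reflexivity.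
Qed.

Lemma interchange {X Y Z} {s s' s'' : Rel V Y Z} {r r' r'' : Rel V X Y}
  (psi' : Cell V s' s'') (psi : Cell V s s') (phi' : Cell V r' r'') (phi : Cell V r r') :
  vcomp (hcomp psi' phi') (hcomp psi phi) = hcomp (vcomp psi' psi) (vcomp phi' phi).
Proof.
  apply cell_ext; intros x z. unfold hcomp, vcomp. apply copair_uniq. intro y.
  copair_beta. rewrite cmp_assoc. copair_beta. rewrite <- tmap_cmp. reflexivity.
Qed.

Lemma lwhisk_id {X Y Z} (t : Rel V Y Z) (r : Rel V X Y) : lwhisk t (idcell r) = idcell _.
Proof. apply hcomp_id. Qed.

Lemma rwhisk_id {X Y Z} (t : Rel V Y Z) (r : Rel V X Y) : rwhisk (idcell t) r = idcell _.
Proof. apply hcomp_id. Qed.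

Lemma lwhisk_vcomp {X Y Z} (t : Rel V Y Z) {r r' r'' : Rel V X Y}
  (p : Cell V r' r'') (q : Cell V r r') :
  vcomp (lwhisk t p) (lwhisk t q) = lwhisk t (vcomp p q).
Proof. unfold lwhisk. rewrite interchange, vcomp_id_l. reflexivity. Qed.

Lemma rwhisk_vcomp {X Y Z} {t t' t'' : Rel V Y Z} (r : Rel V X Y)
  (p : Cell V t' t'') (q : Cell V t t') :
  vcomp (rwhisk p r) (rwhisk q r) = rwhisk (vcomp p q) r.
Proof. unfold rwhisk. rewrite interchange, vcomp_id_l. reflexivity. Qed.

Lemma cellcast_sym {X Y} {r r' : Rel V X Y} (e : r = r') :
  vcomp (cellcast e) (cellcast (eq_sym e)) = idcell _.
Proof. destruct e. apply vcomp_id_l. Qed.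

Lemma assocL_assocR {W X Y Z} (t : Rel V Y Z) (s : Rel V X Y) (r : Rel V W X) :
  vcomp (assocL t s r) (assocR t s r) = idcell _.
Proof.
  apply cell_ext; intros w z. unfold vcomp, idcell, assocL, assocR.
  apply Sum_ext; intro y. apply ten_Sum_ext_l; intro x.
  rewrite cmp_id_l. copair_beta. rewrite asc_iso1, cmp_id_r. reflexivity.
Qed.

Lemma assocR_assocL {W X Y Z} (t : Rel V Y Z) (s : Rel V X Y) (r : Rel V W X) :
  vcomp (assocR t s r) (assocL t s r) = idcell _.
Proof.
  apply cell_ext; intros w z. unfold vcomp, idcell, assocL, assocR.
  apply Sum_ext; intro x. apply ten_Sum_ext_r; intro y.
  rewrite cmp_id_l. copair_beta. rewrite asc_iso2, cmp_id_r. reflexivity.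
Qed.

Lemma vcomp_rewrite2 {X Y} {r1 r2 r3 : Rel V X Y} (p : Cell V r2 r3)
  (q : Cell V r1 r2) (c : Cell V r1 r3) (H : vcomp p q = c) {r0} (rest : Cell V r0 r1) :
  vcomp p (vcomp q rest) = vcomp c rest.
Proof. rewrite <- H, vcomp_assoc. reflexivity. Qed.

Lemma vcomp_rewrite3 {X Y} {r1 r2 r3 r4 : Rel V X Y} (p : Cell V r3 r4)
  (q : Cell V r2 r3) (q' : Cell V r1 r2) (c : Cell V r1 r4) (H : vcomp p (vcomp q q') = c)
  {r0} (rest : Cell V r0 r1) :
  vcomp p (vcomp q (vcomp q' rest)) = vcomp c rest.
Proof. rewrite <- H, !vcomp_assoc. reflexivity. Qed.

Lemma rwhisk_rewrite2 {A B C : Type} {t1 t2 t2' t3 : Rel V B C} (r : Rel V A B)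
  (p : Cell V t2 t3) (q : Cell V t1 t2) (p' : Cell V t2' t3) (q' : Cell V t1 t2')
  (H : vcomp p q = vcomp p' q') {r0} (rest : Cell V r0 (rcomp t1 r)) :
  vcomp (rwhisk p r) (vcomp (rwhisk q r) rest)
  = vcomp (rwhisk p' r) (vcomp (rwhisk q' r) rest).
Proof. rewrite <- !vcomp_assoc, !rwhisk_vcomp, H. reflexivity. Qed.

Lemma lwhisk_rewrite2 {A B C : Type} (t : Rel V B C) {r1 r2 r2' r3 : Rel V A B}
  (p : Cell V r2 r3) (q : Cell V r1 r2) (p' : Cell V r2' r3) (q' : Cell V r1 r2')
  (H : vcomp p q = vcomp p' q') {r0} (rest : Cell V r0 (rcomp t r1)) :
  vcomp (lwhisk t p) (vcomp (lwhisk t q) rest)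
  = vcomp (lwhisk t p') (vcomp (lwhisk t q') rest).
Proof. rewrite <- !vcomp_assoc, !lwhisk_vcomp, H. reflexivity. Qed.

End Cells.

Section Unitors.
Context {V : SMCC}.

(* The unitors of [V-Rel] are defined by cases on a decision [d] of an equation; the
   definitions below abstract over [d], so that [d] can be destructed. *)
Definition lunit_summand {Y} (R : Y -> ob V) (y y' : Y) (d : {y' = y} + {y' <> y})
  : hom V (ten (R y') (if d then unit else bot)) (R y) :=
  match d as d return hom V (ten (R y') (if d then unit else bot)) (R y) with
  | left e => cmp (match e in _ = y0 return hom V (R y') (R y0) with
                   | eq_refl => idm (R y') end) (ru (R y'))
  | right _ => cmp (botten V (R y') (R y)) (sym (R y') bot)
  end.

Definition lunit_inv_summand {Y} (A : ob V) (y : Y) (d : {y = y} + {y <> y})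
  : hom V A (ten A (if d then unit else bot)) :=
  match d as d return hom V A (ten A (if d then unit else bot)) with
  | left _ => ru_inv A
  | right n => False_rect _ (n eq_refl)
  end.

Definition runit_summand {X} (R : X -> ob V) (x x' : X) (d : {x = x'} + {x <> x'})
  : hom V (ten (if d then unit else bot) (R x')) (R x) :=
  match d as d return hom V (ten (if d then unit else bot) (R x')) (R x) with
  | left e => cmp (match e in _ = x0 return hom V (R x0) (R x) with
                   | eq_refl => idm (R x) end) (lu (R x'))
  | right _ => botten V (R x') (R x)
  end.

Definition runit_inv_summand {X} (A : ob V) (x : X) (d : {x = x} + {x <> x})
  : hom V A (ten (if d then unit else bot) A) :=
  match d as d return hom V A (ten (if d then unit else bot) A) with
  | left _ => lu_inv A
  | right n => False_rect _ (n eq_refl)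
  end.

Lemma lunitE {X Y} (r : Rel V X Y) x y :
  lunit r x y
  = copair (fun y' => lunit_summand (r x) y y' (excluded_middle_informative (y' = y))).
Proof. reflexivity. Qed.

Lemma lunit_invE {X Y} (r : Rel V X Y) x y :
  lunit_inv r x y = cmp (inj (fun y' => ten (r x y') (idrel Y y' y)) y)
                        (lunit_inv_summand (r x y) y (excluded_middle_informative (y = y))).
Proof. reflexivity. Qed.

Lemma runitE {X Y} (r : Rel V X Y) x y :
  runit r x y
  = copair (fun x' => runit_summand (fun x' => r x' y) x x'
                                    (excluded_middle_informative (x = x'))).
Proof. reflexivity. Qed.

Lemma runit_invE {X Y} (r : Rel V X Y) x y :
  runit_inv r x y = cmp (inj (fun x' => ten (idrel X x x') (r x' y)) x)
                        (runit_inv_summand (r x y) x (excluded_middle_informative (x = x))).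
Proof. reflexivity. Qed.

Lemma lunit_summand_cancel {Y} (R : Y -> ob V) (y : Y) (d : {y = y} + {y <> y}) S
  (i : hom V (ten (R y) (if d then unit else bot)) S) :
  cmp i (cmp (lunit_inv_summand (R y) y d) (lunit_summand R y y d)) = i.
Proof.
  destruct d as [e|n]; [|contradiction]. rewrite (proof_irrelevance _ e eq_refl).
  cbn. rewrite cmp_id_l, ru_iso1, cmp_id_r. reflexivity.
Qed.

Lemma lunit_summand_iso2 {Y} (R : Y -> ob V) (y : Y) (d : {y = y} + {y <> y}) :
  cmp (lunit_summand R y y d) (lunit_inv_summand (R y) y d) = idm _.
Proof.
  destruct d as [e|n]; [|contradiction]. rewrite (proof_irrelevance _ e eq_refl).
  cbn. rewrite cmp_id_l. apply ru_iso2.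
Qed.

Lemma runit_summand_cancel {X} (R : X -> ob V) (x : X) (d : {x = x} + {x <> x}) S
  (i : hom V (ten (if d then unit else bot) (R x)) S) :
  cmp i (cmp (runit_inv_summand (R x) x d) (runit_summand R x x d)) = i.
Proof.
  destruct d as [e|n]; [|contradiction]. rewrite (proof_irrelevance _ e eq_refl).
  cbn. rewrite cmp_id_l, lu_iso1, cmp_id_r. reflexivity.
Qed.

Lemma runit_summand_iso2 {X} (R : X -> ob V) (x : X) (d : {x = x} + {x <> x}) :
  cmp (runit_summand R x x d) (runit_inv_summand (R x) x d) = idm _.
Proof.
  destruct d as [e|n]; [|contradiction]. rewrite (proof_irrelevance _ e eq_refl).
  cbn. rewrite cmp_id_l. apply lu_iso2.
Qed.

Lemma lunit_summand_bot {Y} (A C : ob V) (y y' : Y) (d : {y' = y} + {y' <> y}) (n : y' <> y)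
  (h k : hom V (ten A (if d then unit else bot)) C) : h = k.
Proof. destruct d; [contradiction|]. apply ten_bot_uniq. Qed.

Lemma runit_summand_bot {X} (A C : ob V) (x x' : X) (d : {x = x'} + {x <> x'}) (n : x <> x')
  (h k : hom V (ten (if d then unit else bot) A) C) : h = k.
Proof. destruct d; [contradiction|]. apply bot_ten_uniq. Qed.

Lemma lunit_inv_lunit {X Y} (r : Rel V X Y) : vcomp (lunit_inv r) (lunit r) = idcell _.
Proof.
  apply cell_ext; intros x y. unfold vcomp, idcell. rewrite lunitE, lunit_invE.
  apply Sum_ext; intro y'. rewrite cmp_id_l. copair_beta.
  pose proof (excluded_middle_informative (y' = y)) as [<-|n].
  - apply (lunit_summand_cancel (r x)).
  - apply (lunit_summand_bot _ _ y y' _ n).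
Qed.

Lemma lunit_lunit_inv {X Y} (r : Rel V X Y) : vcomp (lunit r) (lunit_inv r) = idcell _.
Proof.
  apply cell_ext; intros x y. unfold vcomp, idcell. rewrite lunitE, lunit_invE.
  copair_beta. apply (lunit_summand_iso2 (r x)).
Qed.

Lemma runit_inv_runit {X Y} (r : Rel V X Y) : vcomp (runit_inv r) (runit r) = idcell _.
Proof.
  apply cell_ext; intros x y. unfold vcomp, idcell. rewrite runitE, runit_invE.
  apply Sum_ext; intro x'. rewrite cmp_id_l. copair_beta.
  pose proof (excluded_middle_informative (x = x')) as [<-|n].
  - apply (runit_summand_cancel (fun x' => r x' y)).
  - apply (runit_summand_bot _ _ x x' _ n).
Qed.

Lemma runit_runit_inv {X Y} (r : Rel V X Y) : vcomp (runit r) (runit_inv r) = idcell _.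
Proof.
  apply cell_ext; intros x y. unfold vcomp, idcell. rewrite runitE, runit_invE.
  copair_beta. apply (runit_summand_iso2 (fun x' => r x' y)).
Qed.

End Unitors.

(* Rewriting with an equation between composites of up to three 2-cells inside a
   right-associated vertical composite. *)
Ltac vassoc := repeat rewrite vcomp_assoc.
Ltac vrewrite H :=
  first [ rewrite H | rewrite (vcomp_rewrite2 _ _ _ H) | rewrite (vcomp_rewrite3 _ _ _ _ H) ];
  vassoc.
Ltac vrewrite_rev H := vrewrite (eq_sym H).
Ltac whisk_split := repeat (rewrite <- lwhisk_vcomp || rewrite <- rwhisk_vcomp); vassoc.

Arguments Tcell_id {V M} L {X Y} r : rename.
Arguments Tcell_comp {V M} L {X Y r r' r''} psi phi : rename.
Arguments kappa_nat {V M} L {X Y Z s s' r r'} psi phi : rename.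
Arguments kappa_assoc {V M} L {W X Y Z} t s r : rename.
Arguments kappa_r1 {V M} L {X Y} r : rename.
Arguments kappa_1r {V M} L {X Y} r : rename.

(* The axioms of V-functors and V-natural transformations make sense for an arbitrary
   1-cell [r] (resp. [r], [s]) in place of the graph of [f] (resp. [f], [g]); this is
   what lets them be lifted along [T] before being transported along
   [T (frel f) = frel (Tmap f)] by [recast]. *)
Section Laws.
Context {V : SMCC} {X Y : Type} (a : Rel V X X) (b : Rel V Y Y).

Definition unit_law (eta_a : Cell V (idrel X) a) (eta_b : Cell V (idrel Y) b)
  (r : Rel V X Y) (phi : Cell V (rcomp r a) (rcomp b r)) : Prop :=
  vcomp phi (lwhisk r eta_a) = vcomp (rwhisk eta_b r) (vcomp (lunit_inv r) (runit r)).

Definition mult_law (mu_a : Cell V (rcomp a a) a) (mu_b : Cell V (rcomp b b) b)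
  (r : Rel V X Y) (phi : Cell V (rcomp r a) (rcomp b r)) : Prop :=
  vcomp phi (lwhisk r mu_a)
  = vcomp (rwhisk mu_b r) (vcomp (assocR b b r) (vcomp (lwhisk b phi)
      (vcomp (assocL b r a) (vcomp (rwhisk phi a) (assocR r a a))))).

Definition nat_law_rwhisk (eta_a : Cell V (idrel X) a) (mu_b : Cell V (rcomp b b) b)
  (r s : Rel V X Y) (phi_r : Cell V (rcomp r a) (rcomp b r))
  (zeta : Cell V (rcomp s a) (rcomp b r)) : Prop :=
  zeta = vcomp (rwhisk mu_b r) (vcomp (assocR b b r) (vcomp (lwhisk b phi_r)
           (vcomp (assocL b r a) (vcomp (rwhisk zeta a)
           (vcomp (rwhisk (lwhisk s eta_a) a) (rwhisk (runit_inv s) a)))))).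

Definition nat_law_lwhisk (eta_a : Cell V (idrel X) a) (mu_b : Cell V (rcomp b b) b)
  (r s : Rel V X Y) (phi_s : Cell V (rcomp s a) (rcomp b s))
  (zeta : Cell V (rcomp s a) (rcomp b r)) : Prop :=
  zeta = vcomp (rwhisk mu_b r) (vcomp (assocR b b r) (vcomp (lwhisk b zeta)
           (vcomp (lwhisk b (lwhisk s eta_a))
           (vcomp (lwhisk b (runit_inv s)) phi_s)))).

Definition recast {r r' s s' : Rel V X Y} (er : r = r') (es : s = s')
  (psi : Cell V (rcomp s a) (rcomp b r)) : Cell V (rcomp s' a) (rcomp b r') :=
  vcomp (lwhisk b (cellcast er)) (vcomp psi (rwhisk (cellcast (eq_sym es)) a)).

Lemma recast_refl {r s : Rel V X Y} (psi : Cell V (rcomp s a) (rcomp b r)) :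
  recast eq_refl eq_refl psi = psi.
Proof. unfold recast. cbn. rewrite lwhisk_id, rwhisk_id, vcomp_id_l, vcomp_id_r. reflexivity. Qed.

Lemma recast_unit_law eta_a eta_b {r r' : Rel V X Y} (er : r = r')
  (phi : Cell V (rcomp r a) (rcomp b r)) :
  unit_law eta_a eta_b r phi -> unit_law eta_a eta_b r' (recast er er phi).
Proof. destruct er. rewrite recast_refl. trivial. Qed.

Lemma recast_mult_law mu_a mu_b {r r' : Rel V X Y} (er : r = r')
  (phi : Cell V (rcomp r a) (rcomp b r)) :
  mult_law mu_a mu_b r phi -> mult_law mu_a mu_b r' (recast er er phi).
Proof. destruct er. rewrite recast_refl. trivial. Qed.

Lemma recast_nat_law_rwhisk eta_a mu_b {r r' s s' : Rel V X Y} (er : r = r') (es : s = s')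
  (phi_r : Cell V (rcomp r a) (rcomp b r)) (zeta : Cell V (rcomp s a) (rcomp b r)) :
  nat_law_rwhisk eta_a mu_b r s phi_r zeta ->
  nat_law_rwhisk eta_a mu_b r' s' (recast er er phi_r) (recast er es zeta).
Proof. destruct er, es. rewrite !recast_refl. trivial. Qed.

Lemma recast_nat_law_lwhisk eta_a mu_b {r r' s s' : Rel V X Y} (er : r = r') (es : s = s')
  (phi_s : Cell V (rcomp s a) (rcomp b s)) (zeta : Cell V (rcomp s a) (rcomp b r)) :
  nat_law_lwhisk eta_a mu_b r s phi_s zeta ->
  nat_law_lwhisk eta_a mu_b r' s' (recast es es phi_s) (recast er es zeta).
Proof. destruct er, es. rewrite !recast_refl. trivial. Qed.

End Laws.

Section LaxExtension.
Variables (V : SMCC) (M : SetMonad) (L : LaxExt V M).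

Lemma Tcell_vcomp {X Y} {r r' r'' : Rel V X Y} (p : Cell V r' r'') (q : Cell V r r') :
  vcomp (Tcell L p) (Tcell L q) = Tcell L (vcomp p q).
Proof. symmetry; apply Tcell_comp. Qed.

Lemma kappa_lwhisk {X Y Z} (t : Rel V Y Z) {r r' : Rel V X Y} (phi : Cell V r r') :
  vcomp (kappa L t r') (lwhisk (Trel L t) (Tcell L phi))
  = vcomp (Tcell L (lwhisk t phi)) (kappa L t r).
Proof. unfold lwhisk. rewrite <- Tcell_id. apply kappa_nat. Qed.

Lemma kappa_rwhisk {X Y Z} {t t' : Rel V Y Z} (psi : Cell V t t') (r : Rel V X Y) :
  vcomp (kappa L t' r) (rwhisk (Tcell L psi) (Trel L r))
  = vcomp (Tcell L (rwhisk psi r)) (kappa L t r).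
Proof. unfold rwhisk. rewrite <- Tcell_id. apply kappa_nat. Qed.

(* [kappa_1r] says that [T (lunit r)] is, up to [kappa], an isomorphism; inverting it
   computes [T (lunit_inv r)]. *)
Lemma Tcell_lunit_inv {X Y} (r : Rel V X Y) :
  Tcell L (lunit_inv r) = vcomp (kappa L (idrel Y) r)
     (vcomp (rwhisk (cellcast (eq_sym (T1eq L Y))) (Trel L r)) (lunit_inv (Trel L r))).
Proof.
  assert (Hinv : vcomp (lunit (Trel L r)) (vcomp (rwhisk (cellcast (T1eq L Y)) (Trel L r))
     (vcomp (rwhisk (cellcast (eq_sym (T1eq L Y))) (Trel L r)) (lunit_inv (Trel L r))))
     = idcell _).
  { rewrite <- (vcomp_assoc (rwhisk _ _)), rwhisk_vcomp, cellcast_sym, rwhisk_id, vcomp_id_l.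
    apply lunit_lunit_inv. }
  rewrite <- (vcomp_id_r (Tcell L (lunit_inv r))), <- Hinv.
  vrewrite_rev (kappa_1r L r). vrewrite (Tcell_vcomp (lunit_inv r) (lunit r)).
  rewrite lunit_inv_lunit, Tcell_id, vcomp_id_l. reflexivity.
Qed.

Lemma Tcell_runit_inv {X Y} (r : Rel V X Y) :
  Tcell L (runit_inv r) = vcomp (kappa L r (idrel X))
     (vcomp (lwhisk (Trel L r) (cellcast (eq_sym (T1eq L X)))) (runit_inv (Trel L r))).
Proof.
  assert (Hinv : vcomp (runit (Trel L r)) (vcomp (lwhisk (Trel L r) (cellcast (T1eq L X)))
     (vcomp (lwhisk (Trel L r) (cellcast (eq_sym (T1eq L X)))) (runit_inv (Trel L r))))
     = idcell _).
  { rewrite <- (vcomp_assoc (lwhisk _ _)), lwhisk_vcomp, cellcast_sym, lwhisk_id, vcomp_id_l.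
    apply runit_runit_inv. }
  rewrite <- (vcomp_id_r (Tcell L (runit_inv r))), <- Hinv.
  vrewrite_rev (kappa_r1 L r). vrewrite (Tcell_vcomp (runit_inv r) (runit r)).
  rewrite runit_inv_runit, Tcell_id, vcomp_id_l. reflexivity.
Qed.

(* [T (assocL t s r)] inverts [T (assocR t s r)], which [kappa_assoc] expresses through
   [kappa] once [kappa t s] is invertible. *)
Lemma Tcell_assocL {W X Y Z} (t : Rel V Y Z) (s : Rel V X Y) (r : Rel V W X)
  (kinv : Cell V (Trel L (rcomp t s)) (rcomp (Trel L t) (Trel L s)))
  (Hk : vcomp (kappa L t s) kinv = idcell _) :
  vcomp (Tcell L (assocL t s r)) (kappa L (rcomp t s) r)
  = vcomp (kappa L t (rcomp s r)) (vcomp (lwhisk (Trel L t) (kappa L s r))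
      (vcomp (assocL (Trel L t) (Trel L s) (Trel L r)) (rwhisk kinv (Trel L r)))).
Proof.
  set (rhs := vcomp (kappa L t (rcomp s r)) _).
  assert (Hkappa : kappa L (rcomp t s) r = vcomp (Tcell L (assocR t s r)) rhs).
  { unfold rhs. vrewrite (kappa_assoc L t s r).
    vrewrite (assocR_assocL (Trel L t) (Trel L s) (Trel L r)).
    rewrite vcomp_id_l, rwhisk_vcomp, Hk, rwhisk_id, vcomp_id_r. reflexivity. }
  rewrite Hkappa. vrewrite (Tcell_vcomp (assocL t s r) (assocR t s r)).
  rewrite assocL_assocR, Tcell_id, vcomp_id_l. reflexivity.
Qed.

Lemma Tcell_assocR {W X Y Z} (t : Rel V Y Z) (s : Rel V X Y) (r : Rel V W X)
  (kinv : Cell V (Trel L (rcomp s r)) (rcomp (Trel L s) (Trel L r)))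
  (Hk : vcomp (kappa L s r) kinv = idcell _) :
  vcomp (Tcell L (assocR t s r)) (kappa L t (rcomp s r))
  = vcomp (kappa L (rcomp t s) r) (vcomp (rwhisk (kappa L t s) (Trel L r))
      (vcomp (assocR (Trel L t) (Trel L s) (Trel L r)) (lwhisk (Trel L t) kinv))).
Proof.
  rewrite <- (vcomp_id_r (kappa L t (rcomp s r))), <- (lwhisk_id (Trel L t)), <- Hk.
  rewrite <- lwhisk_vcomp. vassoc. vrewrite (kappa_assoc L t s r). reflexivity.
Qed.

Lemma isVCat_Trel (X : Type) (a : Rel V X X) (eta : Cell V (idrel X) a)
  (mu : Cell V (rcomp a a) a) :
  isVCat a eta mu -> isVCat (Trel L a) (Teta L eta) (Tmu L mu).
Proof.
  intros [Hl [Hr Hassoc]]. unfold Teta, Tmu. split; [|split].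
  - rewrite <- rwhisk_vcomp. vassoc. vrewrite (kappa_rwhisk eta a).
    vrewrite (Tcell_vcomp mu (rwhisk eta a)). rewrite Hl. vrewrite (kappa_1r L a).
    rewrite rwhisk_vcomp, cellcast_sym, rwhisk_id, vcomp_id_r. reflexivity.
  - rewrite <- lwhisk_vcomp. vassoc. vrewrite (kappa_lwhisk a eta).
    vrewrite (Tcell_vcomp mu (lwhisk a eta)). rewrite Hr. vrewrite (kappa_r1 L a).
    rewrite lwhisk_vcomp, cellcast_sym, lwhisk_id, vcomp_id_r. reflexivity.
  - rewrite <- rwhisk_vcomp, <- lwhisk_vcomp. vassoc. vrewrite (kappa_rwhisk mu a).
    vrewrite (Tcell_vcomp mu (rwhisk mu a)). vrewrite_rev (kappa_assoc L a a a).
    vrewrite (Tcell_vcomp (vcomp mu (rwhisk mu a)) (assocR a a a)). rewrite Hassoc.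
    rewrite <- (Tcell_vcomp mu (lwhisk a mu)). vassoc. vrewrite_rev (kappa_lwhisk a mu).
    reflexivity.
Qed.

Section Lifting.
Context {X Y : Type} (a : Rel V X X) (b : Rel V Y Y).

Definition Tlift {r s : Rel V X Y}
  (kinv : Cell V (Trel L (rcomp b r)) (rcomp (Trel L b) (Trel L r)))
  (zeta : Cell V (rcomp s a) (rcomp b r))
  : Cell V (rcomp (Trel L s) (Trel L a)) (rcomp (Trel L b) (Trel L r)) :=
  vcomp kinv (vcomp (Tcell L zeta) (kappa L s a)).

Lemma Tconj_recast (f g : X -> Y)
  (kinv : Cell V (Trel L (rcomp b (frel f))) (rcomp (Trel L b) (Trel L (frel f))))
  (zeta : Cell V (rcomp (frel g) a) (rcomp b (frel f))) :
  Tconj L f g kinv zeta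
  = recast (Trel L a) (Trel L b) (Trel_fun L X Y f) (Trel_fun L X Y g) (Tlift kinv zeta).
Proof. unfold Tconj, recast, Tlift. vassoc. reflexivity. Qed.

Section Inverse.
Variables (r : Rel V X Y) (kinv : Cell V (Trel L (rcomp b r)) (rcomp (Trel L b) (Trel L r))).
Hypotheses (Hk1 : vcomp kinv (kappa L b r) = idcell _)
           (Hk2 : vcomp (kappa L b r) kinv = idcell _).

Lemma Tlift_unit_law (eta_a : Cell V (idrel X) a) (eta_b : Cell V (idrel Y) b)
  (phi : Cell V (rcomp r a) (rcomp b r)) :
  unit_law a b eta_a eta_b r phi ->
  unit_law (Trel L a) (Trel L b) (Teta L eta_a) (Teta L eta_b) (Trel L r) (Tlift kinv phi).
Proof.
  unfold unit_law, Tlift, Teta. intro Hu.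
  rewrite <- lwhisk_vcomp, <- rwhisk_vcomp. vassoc.
  vrewrite (kappa_lwhisk r eta_a). vrewrite (Tcell_vcomp phi (lwhisk r eta_a)).
  rewrite Hu, !Tcell_comp. vassoc. vrewrite (kappa_r1 L r).
  rewrite lwhisk_vcomp, cellcast_sym, lwhisk_id, vcomp_id_r.
  rewrite Tcell_lunit_inv. vassoc. vrewrite_rev (kappa_rwhisk eta_b r).
  vrewrite Hk1. rewrite vcomp_id_l. reflexivity.
Qed.

Lemma Tlift_mult_law (mu_a : Cell V (rcomp a a) a) (mu_b : Cell V (rcomp b b) b)
  (phi : Cell V (rcomp r a) (rcomp b r)) :
  mult_law a b mu_a mu_b r phi ->
  mult_law (Trel L a) (Trel L b) (Tmu L mu_a) (Tmu L mu_b) (Trel L r) (Tlift kinv phi).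
Proof.
  unfold mult_law, Tlift, Tmu. intro Hm.
  rewrite <- !lwhisk_vcomp, <- !rwhisk_vcomp. vassoc.
  vrewrite (kappa_lwhisk r mu_a). vrewrite (Tcell_vcomp phi (lwhisk r mu_a)).
  rewrite Hm, !Tcell_comp. vassoc.
  vrewrite (kappa_assoc L r a a). vrewrite_rev (kappa_rwhisk phi a).
  vrewrite (Tcell_assocL b r a kinv Hk2). vrewrite_rev (kappa_lwhisk b phi).
  vrewrite (Tcell_assocR b b r kinv Hk2). vrewrite_rev (kappa_rwhisk mu_b r).
  vrewrite Hk1. rewrite vcomp_id_l. reflexivity.
Qed.

Lemma Tlift_nat_law_rwhisk (eta_a : Cell V (idrel X) a) (mu_b : Cell V (rcomp b b) b)
  (s : Rel V X Y) (phi_r : Cell V (rcomp r a) (rcomp b r))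
  (zeta : Cell V (rcomp s a) (rcomp b r)) :
  nat_law_rwhisk a b eta_a mu_b r s phi_r zeta ->
  nat_law_rwhisk (Trel L a) (Trel L b) (Teta L eta_a) (Tmu L mu_b) (Trel L r) (Trel L s)
    (Tlift kinv phi_r) (Tlift kinv zeta).
Proof.
  unfold nat_law_rwhisk, Tlift, Tmu, Teta. intro Hn.
  rewrite Hn at 1. rewrite !Tcell_comp. vassoc.
  vrewrite_rev (kappa_rwhisk (runit_inv s) a).
  vrewrite_rev (kappa_rwhisk (lwhisk s eta_a) a).
  vrewrite_rev (kappa_rwhisk zeta a).
  vrewrite (Tcell_assocL b r a kinv Hk2). vrewrite_rev (kappa_lwhisk b phi_r).
  vrewrite (Tcell_assocR b b r kinv Hk2). vrewrite_rev (kappa_rwhisk mu_b r).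
  vrewrite Hk1. rewrite vcomp_id_l, Tcell_runit_inv. whisk_split.
  rewrite (rwhisk_rewrite2 _ _ _ _ _ (eq_sym (kappa_lwhisk s eta_a))).
  whisk_split. reflexivity.
Qed.

Lemma Tlift_nat_law_lwhisk (eta_a : Cell V (idrel X) a) (mu_b : Cell V (rcomp b b) b)
  (s : Rel V X Y) (kinv_s : Cell V (Trel L (rcomp b s)) (rcomp (Trel L b) (Trel L s)))
  (Hks : vcomp (kappa L b s) kinv_s = idcell _)
  (phi_s : Cell V (rcomp s a) (rcomp b s)) (zeta : Cell V (rcomp s a) (rcomp b r)) :
  nat_law_lwhisk a b eta_a mu_b r s phi_s zeta ->
  nat_law_lwhisk (Trel L a) (Trel L b) (Teta L eta_a) (Tmu L mu_b) (Trel L r) (Trel L s)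
    (Tlift kinv_s phi_s) (Tlift kinv zeta).
Proof.
  unfold nat_law_lwhisk, Tlift, Tmu, Teta. intro Hn.
  rewrite Hn at 1. rewrite !Tcell_comp. vassoc.
  rewrite <- (vcomp_id_l (Tcell L phi_s)) at 1. rewrite <- Hks. vassoc.
  vrewrite_rev (kappa_lwhisk b (runit_inv s)).
  vrewrite_rev (kappa_lwhisk b (lwhisk s eta_a)).
  vrewrite_rev (kappa_lwhisk b zeta).
  vrewrite (Tcell_assocR b b r kinv Hk2). vrewrite_rev (kappa_rwhisk mu_b r).
  vrewrite Hk1. rewrite vcomp_id_l, Tcell_runit_inv. whisk_split.
  rewrite (lwhisk_rewrite2 _ _ _ _ _ (eq_sym (kappa_lwhisk s eta_a))).
  whisk_split. reflexivity.
Qed.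

End Inverse.
End Lifting.

Lemma isVFunctor_Tmap (X Y : Type)
  (a : Rel V X X) (eta_a : Cell V (idrel X) a) (mu_a : Cell V (rcomp a a) a)
  (b : Rel V Y Y) (eta_b : Cell V (idrel Y) b) (mu_b : Cell V (rcomp b b) b)
  (f : X -> Y) (phi : Cell V (rcomp (frel f) a) (rcomp b (frel f))) :
  isVFunctor a eta_a mu_a b eta_b mu_b f phi ->
  forall kinv : Cell V (Trel L (rcomp b (frel f))) (rcomp (Trel L b) (Trel L (frel f))),
  vcomp kinv (kappa L b (frel f)) = idcell _ ->
  vcomp (kappa L b (frel f)) kinv = idcell _ ->
  isVFunctor (Trel L a) (Teta L eta_a) (Tmu L mu_a) (Trel L b) (Teta L eta_b) (Tmu L mu_b)
             (Tmap f) (Tconj L f f kinv phi).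
Proof.
  intros [Ha [Hb [Hu Hm]]] kinv Hk1 Hk2. rewrite Tconj_recast.
  split; [|split; [|split]].
  - exact (isVCat_Trel X a eta_a mu_a Ha).
  - exact (isVCat_Trel Y b eta_b mu_b Hb).
  - apply recast_unit_law, Tlift_unit_law; assumption.
  - apply recast_mult_law, Tlift_mult_law; assumption.
Qed.

Lemma isVNat_Tmap (X Y : Type)
  (a : Rel V X X) (eta_a : Cell V (idrel X) a) (mu_a : Cell V (rcomp a a) a)
  (b : Rel V Y Y) (eta_b : Cell V (idrel Y) b) (mu_b : Cell V (rcomp b b) b)
  (f : X -> Y) (phi_f : Cell V (rcomp (frel f) a) (rcomp b (frel f)))
  (g : X -> Y) (phi_g : Cell V (rcomp (frel g) a) (rcomp b (frel g)))
  (zeta : Cell V (rcomp (frel g) a) (rcomp b (frel f))) :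
  isVNat a eta_a mu_a b eta_b mu_b f phi_f g phi_g zeta ->
  forall (kinv_f : Cell V (Trel L (rcomp b (frel f))) (rcomp (Trel L b) (Trel L (frel f))))
         (kinv_g : Cell V (Trel L (rcomp b (frel g))) (rcomp (Trel L b) (Trel L (frel g)))),
  vcomp kinv_f (kappa L b (frel f)) = idcell _ ->
  vcomp (kappa L b (frel f)) kinv_f = idcell _ ->
  vcomp kinv_g (kappa L b (frel g)) = idcell _ ->
  vcomp (kappa L b (frel g)) kinv_g = idcell _ ->
  isVNat (Trel L a) (Teta L eta_a) (Tmu L mu_a) (Trel L b) (Teta L eta_b) (Tmu L mu_b)
         (Tmap f) (Tconj L f f kinv_f phi_f) (Tmap g) (Tconj L g g kinv_g phi_g)
         (Tconj L f g kinv_f zeta).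
Proof.
  intros [Hf [Hg [Hr Hl]]] kinv_f kinv_g Hf1 Hf2 Hg1 Hg2.
  split; [|split; [|split]].
  - apply isVFunctor_Tmap; assumption.
  - apply isVFunctor_Tmap; assumption.
  - rewrite !Tconj_recast. apply recast_nat_law_rwhisk, Tlift_nat_law_rwhisk; assumption.
  - rewrite !Tconj_recast. apply recast_nat_law_lwhisk, Tlift_nat_law_lwhisk; assumption.
Qed.

End LaxExtension.

Theorem mainTheorem3 (V : SMCC) (M : SetMonad) (L : LaxExt V M) :
  (* (1) (TX, Ta, T eta_a, T mu_a . kappa_{a,a}) is a V-category *)
  (forall (X : Type) (a : Rel V X X) (eta : Cell V (idrel X) a)
          (mu : Cell V (rcomp a a) a),
      isVCat a eta mu -> isVCat (Trel L a) (Teta L eta) (Tmu L mu)) /\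
  (* (2) (Tf, kappa^{-1}_{b,f} . T phi_f . kappa_{f,a}) is a V-functor *)
  (forall (X Y : Type)
          (a : Rel V X X) (eta_a : Cell V (idrel X) a) (mu_a : Cell V (rcomp a a) a)
          (b : Rel V Y Y) (eta_b : Cell V (idrel Y) b) (mu_b : Cell V (rcomp b b) b)
          (f : X -> Y) (phi : Cell V (rcomp (frel f) a) (rcomp b (frel f))),
      isVFunctor a eta_a mu_a b eta_b mu_b f phi ->
      forall kinv : Cell V (Trel L (rcomp b (frel f)))
                           (rcomp (Trel L b) (Trel L (frel f))),
        vcomp kinv (kappa L b (frel f)) = idcell _ ->
        vcomp (kappa L b (frel f)) kinv = idcell _ ->
        isVFunctor (Trel L a) (Teta L eta_a) (Tmu L mu_a)
                   (Trel L b) (Teta L eta_b) (Tmu L mu_b)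
                   (Tmap f) (Tconj L f f kinv phi)) /\
  (* (3) kappa^{-1}_{b,f} . T zeta . kappa_{g,a} is a V-natural transformation *)
  (forall (X Y : Type)
          (a : Rel V X X) (eta_a : Cell V (idrel X) a) (mu_a : Cell V (rcomp a a) a)
          (b : Rel V Y Y) (eta_b : Cell V (idrel Y) b) (mu_b : Cell V (rcomp b b) b)
          (f : X -> Y) (phi_f : Cell V (rcomp (frel f) a) (rcomp b (frel f)))
          (g : X -> Y) (phi_g : Cell V (rcomp (frel g) a) (rcomp b (frel g)))
          (zeta : Cell V (rcomp (frel g) a) (rcomp b (frel f))),
      isVNat a eta_a mu_a b eta_b mu_b f phi_f g phi_g zeta ->
      forall (kinv_f : Cell V (Trel L (rcomp b (frel f)))
                             (rcomp (Trel L b) (Trel L (frel f))))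
             (kinv_g : Cell V (Trel L (rcomp b (frel g)))
                             (rcomp (Trel L b) (Trel L (frel g)))),
        vcomp kinv_f (kappa L b (frel f)) = idcell _ ->
        vcomp (kappa L b (frel f)) kinv_f = idcell _ ->
        vcomp kinv_g (kappa L b (frel g)) = idcell _ ->
        vcomp (kappa L b (frel g)) kinv_g = idcell _ ->
        isVNat (Trel L a) (Teta L eta_a) (Tmu L mu_a)
               (Trel L b) (Teta L eta_b) (Tmu L mu_b)
               (Tmap f) (Tconj L f f kinv_f phi_f)
               (Tmap g) (Tconj L g g kinv_g phi_g)
               (Tconj L f g kinv_f zeta)).
Proof.
  split; [|split].
  - exact (isVCat_Trel V M L).
  - exact (isVFunctor_Tmap V M L).
  - exact (isVNat_Tmap V M L).
Qed.
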